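(* Let $\omega\in\Omega_+$, $-\infty\le x\le y_1\le y_2\le z\le\infty$ with $y_1,y_2\in\mathbb Z$, and $t\in[0,\infty]$. Then \[P_{y_1,\omega}[T_z\le T_x\wedge t]\le P_{y_2,\omega}[T_z\le T_x\wedge t].\]
   Context: Cookie environments: $\Omega_+=([1/2,1]^{\mathbb N})^{\mathbb Z}$. $P_{x,\omega}$ is the law of the nearest-neighbor process $(X_n)_{n\ge0}$ with $X_0=x$ which, on its $i$-th visit to site $z$, jumps to $z+1$ with probability $\omega(z,i)$ and to $z-1$ otherwise. $T_k=\inf\{n\ge0:X_n=k\}$ for $k\in\mathbb Z$, and $T_\infty=T_{-\infty}=\infty$. *)

From HB Require Import structures.
From mathcomp Require Import all_boot all_order all_algebra.
From mathcomp Require Import all_classical all_reals all_analysis.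
Set Implicit Arguments. Unset Strict Implicit. Unset Printing Implicit Defensive.
Import Order.TTheory GRing.Theory Num.Theory.
Local Open Scope classical_set_scope.
Local Open Scope ring_scope.

Section Cookie.
Variable R : realType.

(* A cookie environment omega : int -> nat -> R; omega z k is the probability
   of jumping right on the (k+1)-th visit to z (visits indexed from 0). *)
Definition cookie_env_plus (omega : int -> nat -> R) : Prop :=
  forall (z : int) (k : nat), 1 / 2 <= omega z k <= 1.

(* Probability of the steps along a path, given the sites already visited
   ([past], excluding the current site [a]). *)
Fixpoint walk_prob (omega : int -> nat -> R) (past : seq int) (a : int)
    (rest : seq int) : R :=
  match rest with
  | [::] => 1
  | b :: rest' =>
      let k := count_mem a past in
      (if b == a + 1 then omega a k
       else if b == a - 1 then 1 - omega a k else 0)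
      * walk_prob omega (a :: past) b rest'
  end.

Definition cyl_prob (omega : int -> nat -> R) (y : int) (s : seq int) : R :=
  match s with
  | [::] => 1
  | a :: r => (a == y)%:R * walk_prob omega [::] a r
  end.

Definition cookie_walk_law d (T : measurableType d) (P : probability T R)
    (omega : int -> nat -> R) (y : int) (X : nat -> T -> int) : Prop :=
  (forall (n : nat) (k : int), measurable [set w | X n w = k]) /\
  (forall s : seq int,
     P [set w | forall i : nat, (i < size s)%N -> X i w = nth 0 s i]
     = (cyl_prob omega y s)%:E).

Definition hitT T (X : nat -> T -> int) (k : \bar int) (w : T) : \bar R :=
  match k with
  | EFin k0 => ereal_inf [set (n%:R)%:E | n in [set n : nat | X n w = k0]]
  | _ => +oo%E
  end.

Definition hit_event T (X : nat -> T -> int) (x z : \bar int) (t : \bar R)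
  : set T :=
  [set w | (hitT X z w <= Order.min (hitT X x w) t)%E].

End Cookie.

(* Up to a finite horizon n, the probability of {T_z <= T_x /\ n} is a
   polynomial [hit_prob] in the cookies, affine in each of them, and the case
   t = oo is the decreasing limit over n of the same quantity where walks that
   visit neither x nor z count as successes; reflecting the line turns the
   latter into the former.  So it suffices to move the starting point one step
   up in a deterministic environment, where the walk is a single path.  The
   path from v - 1 first makes an excursion below v; the path from v makes the
   very same excursion (the cookies below v are still fresh) when it first
   steps down to v - 1, and otherwise takes the same steps, so it visits z no
   later and x no earlier. *)

From HB Require Import structures.
From mathcomp Require Import all_boot all_order all_algebra.
From mathcomp Require Import all_classical all_reals all_analysis.
From mathcomp Require Import lra zify ring.
Import Order.TTheory GRing.Theory Num.Theory.
Local Open Scope classical_set_scope.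
Local Open Scope ring_scope.

Set Implicit Arguments. Unset Strict Implicit. Unset Printing Implicit Defensive.

Section HitProb.
Variable R : realFieldType.
Implicit Types w : int -> nat -> R.

Definition consume w (l : int) : int -> nat -> R :=
  fun u i => w u (i + (u == l))%N.

(* Probability that the walk from [a] in [w] visits [z] before [x] within [n]
   steps, a walk visiting neither counting with weight [b]. *)
Fixpoint hit_prob (x z : \bar int) (b : R) w (a : int) (n : nat) : R :=
  if a%:E == z then 1 else if a%:E == x then 0 else
  match n with
  | 0 => b
  | n'.+1 => w a 0%N * hit_prob x z b (consume w a) (a + 1) n'
             + (1 - w a 0%N) * hit_prob x z b (consume w a) (a - 1) n'
  end.

Definition env01 w := forall u i, 0 <= w u i <= 1.
Definition env_det w := forall u i, w u i = 0 \/ w u i = 1.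

Lemma env_det_01 w : env_det w -> env01 w.
Proof. by move=> hw u i; case: (hw u i) => ->; rewrite lexx ler01. Qed.

Lemma consume_01 w l : env01 w -> env01 (consume w l).
Proof. by move=> hw u i; apply: hw. Qed.

Lemma consume_det w l : env_det w -> env_det (consume w l).
Proof. by move=> hw u i; apply: hw. Qed.

Lemma consumeC w a b : consume (consume w a) b = consume (consume w b) a.
Proof.
apply/funext => u; apply/funext => i.
by rewrite /consume -!addnA [((u == b) + _)%N]addnC.
Qed.

Lemma hit_prob_bound x z b w a n : env01 w -> 0 <= b <= 1 ->
  0 <= hit_prob x z b w a n <= 1.
Proof.
elim: n w a => [|n IH] w a hw hb /=.
  by case: ifP => _; [rewrite ler01 lexx|case: ifP => _ //; rewrite lexx ler01].
case: ifP => _; first by rewrite ler01 lexx.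
case: ifP => _; first by rewrite lexx ler01.
have /andP[h1 h2] := hw a 0%N.
have /andP[g1 g2] := IH (consume w a) (a + 1) (consume_01 a hw) hb.
have /andP[k1 k2] := IH (consume w a) (a - 1) (consume_01 a hw) hb.
apply/andP; split; first by rewrite addr_ge0 // mulr_ge0 // subr_ge0.
nra.
Qed.

Lemma hit_prob_det_ge0 x z w a n : env_det w -> 0 <= hit_prob x z 0 w a n.
Proof.
move=> hw; have hb : 0 <= (0 : R) <= 1 by rewrite lexx ler01.
by have /andP[] := hit_prob_bound x z a n (env_det_01 hw) hb.
Qed.

Lemma hit_prob_target x z b w a n : a%:E = z -> hit_prob x z b w a n = 1.
Proof. by move=> h; case: n => [|n] /=; rewrite h eqxx. Qed.

Lemma hit_prob_barrier x z b w a n : a%:E != z -> a%:E = x ->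
  hit_prob x z b w a n = 0.
Proof. by move=> /negbTE h1 h2; case: n => [|n] /=; rewrite h1 h2 eqxx. Qed.

Lemma hit_prob_horizon0 x z b w a : a%:E != z -> a%:E != x ->
  hit_prob x z b w a 0 = b.
Proof. by move=> /negbTE h1 /negbTE h2 /=; rewrite h1 h2. Qed.

Definition det_step w (a : int) : int := if w a 0%N == 1 then a + 1 else a - 1.

Lemma det_stepP w a : det_step w a = a + 1 \/ det_step w a = a - 1.
Proof. by rewrite /det_step; case: ifP; [left|right]. Qed.

Lemma det_step_consume w u s : u != s -> det_step (consume w s) u = det_step w u.
Proof. by move=> /negbTE h; rewrite /det_step /consume h addn0. Qed.

Lemma hit_prob_det_step x z b w a n : env_det w -> a%:E != z -> a%:E != x ->
  hit_prob x z b w a n.+1 = hit_prob x z b (consume w a) (det_step w a) n.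
Proof.
move=> hw /negbTE hz /negbTE hx /=; rewrite hz hx /det_step.
case: (hw a 0%N) => ->; first by rewrite eq_sym oner_eq0 mul0r add0r subr0 mul1r.
by rewrite eqxx mul1r subrr mul0r addr0.
Qed.

Lemma step_barrier (x : \bar int) u u' : (x < u%:E)%E -> u' = u + 1 \/ u' = u - 1 ->
  u'%:E = x \/ (x < u'%:E)%E.
Proof.
case: x => [x0| |] /=; [| by rewrite ltNge leey | by move=> _ _; right; rewrite ltNyr].
rewrite ?lte_fin => h [->|->]; [right|]; rewrite ?lte_fin; first by lia.
have [->|hne] := eqVneq (u - 1) x0; first by left.
by right; rewrite ?lte_fin; lia.
Qed.

End HitProb.

Section DetComparison.
Variables (R : realFieldType) (x z : \bar int) (v : int).
Hypothesis vz : (v%:E <= z)%E.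
Local Notation env := (int -> nat -> R).

(* [below_path e u k e']: after [k] steps the deterministic walk started at
   [v - 1] in [e] is at [u] in the environment [e'], and has stayed strictly
   between [x] and [v]. *)
Inductive below_path (e : env) : int -> nat -> env -> Prop :=
| below_path0 : (x < (v - 1)%:E)%E -> below_path e (v - 1) 0 e
| below_pathS u k e' : below_path e u k e' -> (x < (det_step e' u)%:E)%E ->
    det_step e' u < v -> below_path e (det_step e' u) k.+1 (consume e' u).

(* The walk from [v - 1] in [e] first reaches [v] at time [r], in [e_end]. *)
Definition excursion (e : env) (r : nat) (e_end : env) := exists k u e',
  [/\ r = k.+1, below_path e u k e', det_step e' u = v & e_end = consume e' u].

Lemma below_path0_inv e u e' : below_path e u 0 e' ->
  [/\ u = v - 1, e' = e & (x < (v - 1)%:E)%E].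
Proof. by move=> h; inversion h. Qed.

Lemma below_pathS_inv e u' k e'' : below_path e u' k.+1 e'' ->
  exists u e', [/\ below_path e u k e', u' = det_step e' u, e'' = consume e' u,
                   (x < u'%:E)%E & u' < v].
Proof. by move=> h; inversion h; subst; exists u, e'; split. Qed.

Lemma below_path_range e u k e' : below_path e u k e' -> (x < u%:E)%E /\ u < v.
Proof. by case=> [h|u0 k0 e0 _ h1 h2] //; split=> //; rewrite ltrBlDr ltrDl. Qed.

Lemma below_path_inner e u k e' : below_path e u k e' -> u%:E != z /\ u%:E != x.
Proof.
move=> /below_path_range [hxu huv]; split; last by rewrite gt_eqF.
by rewrite lt_eqF // (lt_le_trans _ vz) // lte_fin.
Qed.

Lemma below_path_start e u k e' : below_path e u k e' -> (x < (v - 1)%:E)%E.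
Proof. by elim. Qed.

Lemma below_path_fun e k u u' e1 e2 :
  below_path e u k e1 -> below_path e u' k e2 -> u = u' /\ e1 = e2.
Proof.
elim: k u u' e1 e2 => [|k IH] u u' e1 e2.
  by move=> /below_path0_inv [-> -> _] /below_path0_inv [-> -> _].
move=> /below_pathS_inv [u0 [e0 [h0 -> -> _ _]]].
move=> /below_pathS_inv [u1 [e3 [h1 -> -> _ _]]].
by have [-> ->] := IH _ _ _ _ h0 h1.
Qed.

Lemma below_path_prefix e u k e' : below_path e u k e' -> forall j, (j <= k)%N ->
  exists u1 e1, below_path e u1 j e1.
Proof.
elim=> [h|u0 k0 e0 h0 IH h1 h2] j hj.
  by move: hj; rewrite leqn0 => /eqP ->; exists (v - 1), e; constructor.
move: hj; rewrite leq_eqVlt => /orP [/eqP -> | hlt]; last exact: IH.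
by exists (det_step e0 u0), (consume e0 u0); apply: below_pathS.
Qed.

Lemma below_path_above e u k e' : below_path e u k e' -> forall s, v <= s -> e' s = e s.
Proof.
elim=> // u0 k0 e0 h0 IH _ _ s hs; have [_ hu] := below_path_range h0.
apply/funext => i; rewrite /consume.
have -> : (s == u0) = false by rewrite gt_eqF // (lt_le_trans hu hs).
by rewrite addn0 IH.
Qed.

Lemma below_path_consume e u k e' s : below_path e u k e' -> v <= s ->
  below_path (consume e s) u k (consume e' s).
Proof.
move=> h hs; elim: h => [h|u0 k0 e0 h0 IH h1 h2]; first by constructor.
have [_ hu] := below_path_range h0.
have hne : u0 != s by rewrite lt_eqF // (lt_le_trans hu hs).
rewrite consumeC -(det_step_consume e0 hne); constructor => //; by rewrite det_step_consume.
Qed.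

Lemma below_path_det e u k e' : env_det e -> below_path e u k e' -> env_det e'.
Proof. by move=> hd; elim=> // u0 k0 e0 _ IH _ _; apply: consume_det. Qed.

(* The induction behind the coupling.  [claim_start]: the walk from [v - 1],
   [k] steps into its first excursion below [v], against the walk from [v] with
   [k] more steps.  [claim_lag]: at or above [v], a walk that has made that
   excursion against one that has not, with [r] more steps.  [claim_mid]: the
   walk that has made it, stepping down to [v - 1], against one [j] steps into
   it. *)
Definition claim_start nL nU := forall eU u k eL, env_det eU ->
  below_path eU u k eL -> nU = (nL + k)%N ->
  hit_prob x z 0 eL u nL <= hit_prob x z 0 eU v nU.

Definition claim_lag nL nU := forall a b r q, env_det a -> excursion a r b ->
  v <= q -> nU = (nL + r)%N -> hit_prob x z 0 b q nL <= hit_prob x z 0 a q nU.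

Definition claim_mid nL nU := forall a b r u j a2, env_det a -> excursion a r b ->
  below_path a u j a2 -> (j < r)%N -> (nU + j = nL + r)%N ->
  hit_prob x z 0 b (v - 1) nL <= hit_prob x z 0 a2 u nU.

Definition claims_below S := forall nL nU, (nL + nU < S)%N ->
  [/\ claim_start nL nU, claim_lag nL nU & claim_mid nL nU].

Lemma claim_start_step nL nU : claims_below (nL + nU) -> claim_start nL nU.
Proof.
move=> IH eU u k eL hd hp hnU; subst nU.
have [hxu huv] := below_path_range hp.
have [huz hux] := below_path_inner hp.
have hdL := below_path_det hd hp.
case: nL IH => [|m] IH; first by rewrite hit_prob_horizon0 // hit_prob_det_ge0.
have [IHs IHl _] := IH m (m.+1 + k)%N ltac:(lia).
rewrite hit_prob_det_step //; set u' := det_step eL u.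
case: (step_barrier hxu (det_stepP eL u)) => [hx'|hx'].
  have hu'z : u'%:E != z.
    by rewrite hx' lt_eqF // (lt_trans hxu) // (lt_le_trans _ vz) // lte_fin.
  by rewrite (hit_prob_barrier _ _ _ hu'z hx') hit_prob_det_ge0.
have hu'v : u' <= v by rewrite /u'; case: (det_stepP eL u) => ->; lia.
have [hv|hne] := eqVneq u' v.
  by rewrite hv; apply: (IHl eU _ k.+1 v) => //; [exists k, u, eL; split | lia].
apply: (IHs eU u' k.+1) => //; last by lia.
by apply: below_pathS => //; rewrite lt_neqAle hne hu'v.
Qed.

Lemma claim_lag_step nL nU : claims_below (nL + nU) -> claim_lag nL nU.
Proof.
move=> IH a b r q hd [k [u [e' [hr hp hst hb]]]] hvq hnU; subst nU.
have [hxu huv] := below_path_range hp.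
have hxq : (x < q%:E)%E by rewrite (lt_trans hxu) // lte_fin (lt_le_trans huv).
have hdb : env_det b by rewrite hb; apply/consume_det/(below_path_det hd hp).
have [hz|hz] := eqVneq (q%:E) z; first by rewrite !hit_prob_target.
have hqx : q%:E != x by rewrite gt_eqF.
case: nL IH => [|m] IH; first by rewrite hit_prob_horizon0 // hit_prob_det_ge0.
have [_ IHl IHm] := IH m (m + r)%N ltac:(lia).
rewrite addSn !hit_prob_det_step //.
have hqu : q != u by rewrite gt_eqF // (lt_le_trans huv hvq).
have -> : det_step b q = det_step a q.
  by rewrite hb det_step_consume // /det_step (below_path_above hp hvq).
have hexc : excursion (consume a q) r (consume b q).
  exists k, u, (consume e' q); split => //.
  - exact: below_path_consume.
  - by rewrite det_step_consume // eq_sym.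
  - by rewrite hb consumeC.
have [hvq'|hlt] := boolP (v <= det_step a q).
  exact: (IHl _ _ _ _ (consume_det q hd) hexc hvq' erefl).
have [hqv ->] : q = v /\ det_step a q = v - 1.
  by case: (det_stepP a q) hlt => -> ?; lia.
rewrite hqv in hexc *.
apply: (IHm (consume a v) _ r (v - 1) 0%N) => //.
- exact: consume_det.
- by constructor; apply: (below_path_start hp).
- by rewrite hr.
- by rewrite addn0.
Qed.

Lemma claim_mid_step nL nU : claims_below (nL + nU) -> claim_mid nL nU.
Proof.
move=> IH a b r u j a2 hd [k [u0 [e0 [hr hp0 hst hb]]]] hp hj hn.
have [huz hux] := below_path_inner hp.
have hd2 := below_path_det hd hp.
case: nU IH hn => [|m] IH hn; first by lia.
rewrite hit_prob_det_step //.
have [hjk|hjk] : j = k \/ (j < k)%N by lia.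
  subst j; have [hu ha] := below_path_fun hp hp0; subst u a2.
  have [IHs _ _] := IH nL nL ltac:(lia).
  rewrite hst -hb (_ : m = nL); last by lia.
  apply: (IHs b (v - 1) 0%N b) => //; last by rewrite addn0.
  - by rewrite hb; apply/consume_det/(below_path_det hd hp0).
  - by constructor; apply: (below_path_start hp0).
have [_ _ IHm] := IH nL m ltac:(lia).
have [u1 [e1 h1]] := below_path_prefix hp0 hjk.
have [u2 [e2 [h2 hu1 he1 _ _]]] := below_pathS_inv h1.
have [hu2 he2] := below_path_fun h2 hp; subst u2 e2.
apply: (IHm a b r (det_step a2 u) j.+1 (consume a2 u)) => //; last by lia.
- by exists k, u0, e0; split.
- by rewrite -hu1 -he1.
- lia.
Qed.

Lemma claims_all S : claims_below S.
Proof.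
elim: S => [|S IH] nL nU hS //.
have IH' : claims_below (nL + nU) by move=> p q hpq; apply: IH; lia.
by split; [apply: claim_start_step | apply: claim_lag_step | apply: claim_mid_step].
Qed.

Lemma hit_prob_det_pred_le (w : env) n : env_det w -> (x <= (v - 1)%:E)%E ->
  hit_prob x z 0 w (v - 1) n <= hit_prob x z 0 w v n.
Proof.
move=> hw; rewrite le_eqVlt => /orP [/eqP hx|hx].
  rewrite hit_prob_barrier ?hit_prob_det_ge0 //.
  by rewrite lt_eqF // (lt_le_trans _ vz) // lte_fin ltrBlDr ltrDl.
have [hs _ _] := claims_all (ltnSn (n + n)).
by apply: (hs w (v - 1) 0%N w) => //; [constructor | rewrite addn0].
Qed.

End DetComparison.

Section Monotonicity.
Variable R : realFieldType.
Implicit Types w : int -> nat -> R.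

Definition env_set w (p : int * nat) (c : R) : int -> nat -> R :=
  fun u i => if (u, i) == p then c else w u i.

Lemma consume_env_set_here w a c : consume (env_set w (a, 0%N) c) a = consume w a.
Proof.
apply/funext => u; apply/funext => j; rewrite /consume /env_set xpair_eqE.
by case: (eqVneq u a) => [->|hne] //=; rewrite addn1.
Qed.

Lemma consume_env_set w a s i c : ~~ ((s == a) && (i == 0%N)) ->
  consume (env_set w (s, i) c) a = env_set (consume w a) (s, (i - (s == a))%N) c.
Proof.
move=> h; apply/funext => u; apply/funext => j.
rewrite /consume /env_set !xpair_eqE; case: (eqVneq u s) => [->|] //=.
congr (if _ then _ else _).
case: (eqVneq s a) h => [? | _] /= h; last by rewrite addn0 subn0.
by subst; case: i h => // i _; rewrite addn1 subn1 /= eqSS.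
Qed.

Lemma hit_prob_env_set x z b n : forall w a s i c,
  hit_prob x z b (env_set w (s, i) c) a n =
  (1 - c) * hit_prob x z b (env_set w (s, i) 0) a n
  + c * hit_prob x z b (env_set w (s, i) 1) a n.
Proof.
elim: n => [|n IH] w a s i c /=.
  by case: ifP => _; [|case: ifP => _]; ring.
case: ifP => _; first ring.
case: ifP => _; first ring.
have [/andP[/eqP hs /eqP hi]|hne] := boolP ((s == a) && (i == 0%N)).
  by subst s i; rewrite !consume_env_set_here /env_set !eqxx; ring.
rewrite !consume_env_set //.
have hwa c' : env_set w (s, i) c' a 0%N = w a 0%N.
  rewrite /env_set xpair_eqE.
  by case: ifP => // /andP[/eqP h1 /eqP h2]; rewrite h1 -h2 !eqxx in hne.
by rewrite !hwa (IH _ (a + 1) _ _ c) (IH _ (a - 1) _ _ c); ring.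
Qed.

Lemma hit_prob_local x z b n : forall w w' a,
  (forall u i, (i < n)%N -> a - n%:Z <= u <= a + n%:Z -> w u i = w' u i) ->
  hit_prob x z b w a n = hit_prob x z b w' a n.
Proof.
elim: n => [|n IH] w w' a h //=.
case: ifP => // _; case: ifP => // _.
have -> : w a 0%N = w' a 0%N by apply: h => //; lia.
congr (_ * _ + _ * _); apply: IH => u i hi hu; rewrite /consume; apply: h;
  by case: (u == a); lia.
Qed.

Lemma cookie_box_cover (lo : int) (n m : nat) : exists L : seq (int * nat),
  forall u i, (i < n)%N -> lo <= u < lo + m%:Z -> (u, i) \in L.
Proof.
elim: m => [|m [L hL]]; first by exists [::] => u i _; lia.
exists ([seq (lo + m%:Z, i) | i <- iota 0 n] ++ L) => u i hi hu.
rewrite mem_cat; have [->|hne] := eqVneq u (lo + m%:Z).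
  by rewrite map_f // mem_iota.
by rewrite hL ?orbT //; lia.
Qed.

Section FromDeterministic.
Variables (x z : \bar int) (a : int) (n : nat).
Hypothesis det_le : forall w, env_det w ->
  hit_prob x z 0 w a n <= hit_prob x z 0 w (a + 1) n.

Let in_box u i := (i < n)%N && (a - n%:Z <= u <= a + 1 + n%:Z).

(* Both sides only see the cookies of the box and are affine in each of them,
   so the free cookies of the box can be fixed to 0 or 1 one at a time. *)
Lemma succ_le_of_det_box (L : seq (int * nat)) w : env01 w ->
  (forall u i, in_box u i -> (u, i) \in L \/ (w u i = 0 \/ w u i = 1)) ->
  hit_prob x z 0 w a n <= hit_prob x z 0 w (a + 1) n.
Proof.
elim: L w => [|[s i] L IH] w hw hL.
  pose w1 u i := if in_box u i then w u i else 0.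
  have hd1 : env_det w1.
    by move=> u i; rewrite /w1; case: ifP => hb; [case: (hL u i hb) | left].
  have hloc b : forall u i, (i < n)%N -> b - n%:Z <= u <= b + n%:Z ->
      (b = a) \/ (b = a + 1) -> w u i = w1 u i.
    by move=> u i hi hu hb; rewrite /w1 /in_box hi /=; case: ifP => //; lia.
  rewrite (@hit_prob_local _ _ _ _ w w1) ?(@hit_prob_local _ _ _ _ w w1 (a + 1)).
  - exact: det_le.
  - by move=> u i hi hu; apply: (hloc (a + 1)) => //; right.
  - by move=> u i hi hu; apply: (hloc a) => //; left.
set c := w s i.
have hw_set : w = env_set w (s, i) c.
  apply/funext => u; apply/funext => j.
  by rewrite /env_set xpair_eqE; case: eqVneq => [->|] //=; case: eqVneq => [->|].
have hfix c' : c' = 0 \/ c' = 1 ->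
    hit_prob x z 0 (env_set w (s, i) c') a n <=
    hit_prob x z 0 (env_set w (s, i) c') (a + 1) n.
  move=> hc'; apply: IH.
    move=> u j; rewrite /env_set; case: ifP => _; last exact: hw.
    by case: hc' => ->; rewrite lexx ler01.
  move=> u j hb; rewrite /env_set; case: ifP => [_|hne]; first by right.
  by case: (hL u j hb) => [|]; [rewrite in_cons hne; left | right].
have /andP[c0 c1] := hw s i.
have hsplit a' : hit_prob x z 0 w a' n = (1 - c) * hit_prob x z 0 (env_set w (s, i) 0) a' n
    + c * hit_prob x z 0 (env_set w (s, i) 1) a' n.
  by rewrite {1}hw_set hit_prob_env_set.
rewrite !hsplit.
apply: lerD; apply: ler_wpM2l; rewrite ?subr_ge0 //; apply: hfix; by [left|right].
Qed.

Lemma succ_le_of_det w : env01 w ->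
  hit_prob x z 0 w a n <= hit_prob x z 0 w (a + 1) n.
Proof.
have [L hL] := cookie_box_cover (a - n%:Z) n (2 * n + 2).
move=> hw; apply: (@succ_le_of_det_box L w hw) => u i /andP[hi hu].
by left; apply: hL => //; lia.
Qed.

End FromDeterministic.

Lemma hit_prob_succ_le0 x z w a n : env01 w -> (x <= a%:E)%E -> ((a + 1)%:E <= z)%E ->
  hit_prob x z 0 w a n <= hit_prob x z 0 w (a + 1) n.
Proof.
move=> hw hx hz; apply: succ_le_of_det => // w' hd.
by have := hit_prob_det_pred_le hz n hd; rewrite addrK; apply.
Qed.

Definition env_reflect w : int -> nat -> R := fun s i => 1 - w (- s) i.

Lemma env_reflect_01 w : env01 w -> env01 (env_reflect w).
Proof.
move=> hw u i; have /andP[h1 h2] := hw (- u) i.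
by rewrite /env_reflect subr_ge0 h2 lerBlDr lerDl h1.
Qed.

Lemma consume_reflect w a : consume (env_reflect w) (- a) = env_reflect (consume w a).
Proof. by apply/funext => u; apply/funext => j; rewrite /consume /env_reflect eqr_oppLR. Qed.

(* Reflection exchanges the roles of [x] and [z], and with them success and
   failure of the undecided walks. *)
Lemma hit_prob_reflect x z n : x != z -> forall w a,
  hit_prob x z 1 w a n = 1 - hit_prob (- z)%E (- x)%E 0 (env_reflect w) (- a) n.
Proof.
move=> hxz; elim: n => [|n IH] w a /=; rewrite !EFinN !eqe_opp.
  case: (eqVneq (a%:E) z) => [->|hz]; first by rewrite eq_sym (negbTE hxz) subr0.
  by case: (eqVneq (a%:E) x) => _ /=; rewrite ?subrr ?subr0.
case: (eqVneq (a%:E) z) => [->|hz]; first by rewrite eq_sym (negbTE hxz) subr0.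
case: (eqVneq (a%:E) x) => _ /=; first by rewrite subrr.
rewrite !IH consume_reflect /env_reflect opprK.
have -> : - a + 1 = - (a - 1) by rewrite opprB addrC.
have -> : - a - 1 = - (a + 1) by rewrite opprD.
ring.
Qed.

Lemma hit_prob_succ_le1 x z w a n : env01 w -> (x <= a%:E)%E -> ((a + 1)%:E <= z)%E ->
  hit_prob x z 1 w a n <= hit_prob x z 1 w (a + 1) n.
Proof.
move=> hw hx hz.
have hxz : x != z.
  by rewrite lt_eqF // (le_lt_trans hx) // (lt_le_trans _ hz) // lte_fin ltrDl.
rewrite !hit_prob_reflect // lerD2l lerN2.
have h1 : (- z <= (- (a + 1))%:E)%E by rewrite EFinN leeN2.
have h2 : ((- (a + 1) + 1)%:E <= - x)%E by rewrite opprD addrNK EFinN leeN2.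
have := hit_prob_succ_le0 n (env_reflect_01 hw) h1 h2.
by rewrite opprD addrNK.
Qed.

Lemma hit_prob_mono x z (b : bool) w y1 y2 n : env01 w ->
  (x <= y1%:E)%E -> y1 <= y2 -> (y2%:E <= z)%E ->
  hit_prob x z b%:R w y1 n <= hit_prob x z b%:R w y2 n.
Proof.
move=> hw hx h12 hz.
have [k hk] : exists k : nat, y2 = y1 + k%:Z by exists `|y2 - y1|%N; lia.
subst y2; elim: k hz {h12} => [|k IH] hz; first by rewrite addr0.
have hz' : ((y1 + k%:Z)%:E <= z)%E by apply: le_trans hz; rewrite lee_fin; lia.
apply: le_trans (IH hz') _.
have -> : y1 + k.+1%:Z = (y1 + k%:Z) + 1 by lia.
have hx' : (x <= (y1 + k%:Z)%:E)%E by apply: (le_trans hx); rewrite lee_fin; lia.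
have hz'' : (((y1 + k%:Z) + 1)%:E <= z)%E by apply: le_trans hz; rewrite lee_fin; lia.
by case: b {IH}; [apply: hit_prob_succ_le1 | apply: hit_prob_succ_le0].
Qed.

End Monotonicity.

Fixpoint first_hit (x z : \bar int) (b : bool) (s : seq int) : bool :=
  match s with
  | [::] => b
  | a :: r => if a%:E == z then true else if a%:E == x then false else first_hit x z b r
  end.

Lemma first_hit_rcons x z s a : first_hit x z true (rcons s a) -> first_hit x z true s.
Proof. by elim: s => //= c s IH; case: ifP => // _; case: ifP. Qed.

Lemma mkseq_cons (T : Type) (f : nat -> T) n :
  mkseq f n.+1 = f 0%N :: mkseq (fun i => f i.+1) n.
Proof. by elim: n => [|n IH] //; rewrite mkseqS IH mkseqS. Qed.

Lemma first_hitP x z b (f : nat -> int) N :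
  first_hit x z b (mkseq f N.+1) <->
  (exists i, [/\ (i <= N)%N, z = (f i)%:E & forall j, (j < i)%N -> x <> (f j)%:E]) \/
  (b /\ forall i, (i <= N)%N -> z <> (f i)%:E /\ x <> (f i)%:E).
Proof.
elim: N f => [|N IH] f; rewrite mkseq_cons /=;
  (case: (eqVneq (f 0%N)%:E z) => [hz|hz]; first by split => // _; left; exists 0%N);
  case: (eqVneq (f 0%N)%:E x) => [hx|hx].
- split => //; case=> [[i [hi hzi _]]|[_ h]].
    by move: hi; rewrite leqn0 => /eqP hi; subst i; rewrite hzi eqxx in hz.
  by case: (h 0%N) => // _ []; rewrite hx.
- split.
    move=> hb; right; split => // i; rewrite leqn0 => /eqP ->.
    by split => h; [rewrite h eqxx in hz | rewrite h eqxx in hx].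
  case=> [[i [hi hzi _]]|[hb _]] //.
  by move: hi; rewrite leqn0 => /eqP hi; subst i; rewrite hzi eqxx in hz.
- split => //; case=> [[i [hi hzi hj]]|[_ h]].
    case: i hi hzi hj => [|i] hi hzi hj; first by rewrite hzi eqxx in hz.
    by case: (hj 0%N).
  by case: (h 0%N) => // _ []; rewrite hx.
rewrite (IH (fun i => f i.+1)); split.
- case=> [[i [hi hzi hj]]|[hb h]].
    left; exists i.+1; split => //.
    by case=> [|j] hji; [move=> h; rewrite h eqxx in hx | exact: hj].
  right; split => //; case=> [|i] hi; last exact: h.
  by split => h0; [rewrite h0 eqxx in hz | rewrite h0 eqxx in hx].
- case=> [[i [hi hzi hj]]|[hb h]].
    case: i hi hzi hj => [|i] hi hzi hj; first by rewrite hzi eqxx in hz.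
    by left; exists i; split => // j hji; apply: hj.
  by right; split => // i hi; apply: h.
Qed.

Section HittingTimes.
Variables (R : realType) (T : Type) (X : nat -> T -> int).

Definition first_hit_event x z b k n :=
  [set w | first_hit x z b (mkseq (fun i => X (k + i)%N w) n.+1)].

Lemma first_hit_event_antitone x z k :
  {homo first_hit_event x z true k : n m / (n <= m)%N >-> (m <= n)%O}.
Proof.
move=> n m /subnK <-; rewrite subsetEset.
elim: (m - n)%N => [|j IH] //; apply: subset_trans IH => w.
set f := fun i => X (k + i)%N w.
change (first_hit x z true (mkseq f (j + n).+2) -> first_hit x z true (mkseq f (j + n).+1)).
by rewrite mkseqS; apply: first_hit_rcons.
Qed.

Definition visits (k : \bar int) w j := k = (X j w)%:E.

Lemma hitT_cases k w :
  (exists i0, [/\ visits k w i0, (forall j, visits k w j -> (i0 <= j)%N)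
       & hitT R X k w = (i0%:R)%:E]) \/
  ((forall j, ~ visits k w j) /\ hitT R X k w = +oo%E).
Proof.
case: k => [k0| |]; [|by right; split..].
case: (pselect (exists j, X j w = k0)) => [hex|hne].
- left.
  have hex' : exists j, X j w == k0 by case: hex => j hj; exists j; apply/eqP.
  case: (ex_minnP hex') => i0 /eqP hi0 hmin.
  exists i0; split; first by rewrite /visits hi0.
  + by move=> j [hj]; apply: hmin; rewrite hj.
  + rewrite /hitT; apply/le_anti/andP; split.
      by apply: ge_ereal_inf; exists (i0%:R)%:E => //; exists i0.
    apply: le_ereal_inf_tmp => e [j hj <-].
    by rewrite lee_fin ler_nat; apply: hmin; apply/eqP.
- right; split; first by move=> j [hj]; apply: hne; exists j.
  rewrite /hitT.
  have -> : [set n : nat | X n w = k0] = set0.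
    by apply/seteqP; split => // n /= hn; apply: hne; exists n.
  by rewrite image_set0 ereal_inf0.
Qed.

Lemma hitT_le_fin k w (r : R) :
  (hitT R X k w <= r%:E)%E <-> exists i, visits k w i /\ (i%:R <= r).
Proof.
case: (hitT_cases k w) => [[i0 [h0 hmin ->]]|[hn ->]].
  rewrite lee_fin; split; first by move=> h; exists i0.
  move=> [i [hi hr]]; apply: le_trans hr; rewrite ler_nat; exact: hmin.
split; first by rewrite leNgt ltey.
by move=> [i [hi _]]; case: (hn i).
Qed.

Lemma hitT_le_hitT kz kx w :
  (hitT R X kz w <= hitT R X kx w)%E <->
  (forall j, visits kx w j -> exists i, (i <= j)%N /\ visits kz w i).
Proof.
case: (hitT_cases kx w) => [[i0 [h0 hmin ->]]|[hn ->]].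
  rewrite hitT_le_fin; split.
    move=> [i [hi hr]] j hj; exists i; split => //.
    by apply: leq_trans (hmin _ hj); rewrite -(ler_nat R).
  move=> h; case: (h i0 h0) => i [hi1 hi2]; exists i; split => //.
  by rewrite ler_nat.
split => // _; first by move=> j hj; case: (hn j).
by rewrite leey.
Qed.

Lemma hit_event_fin x z (r : R) : 0 <= r ->
  hit_event X x z (r%:E) =
  [set w | first_hit x z false (mkseq (fun i => X i w) (Num.truncn r).+1)].
Proof.
move=> r0; apply/seteqP; split => w /=.
  rewrite /hit_event /= le_min => /andP [/hitT_le_hitT hzx /hitT_le_fin [i [hi hir]]].
  apply/first_hitP; left.
  case: (hitT_cases z w) => [[i0 [h0 hmin _]]|[hn _]]; last by case: (hn i).
  exists i0; split => //.
  - by rewrite truncn_ge_nat //; apply: le_trans hir; rewrite ler_nat; apply: hmin.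
  - move=> j hj hxj; case: (hzx j hxj) => i1 [hi1 hz1].
    by have := hmin _ hz1; lia.
move=> /first_hitP [[i [hi hzi hj]]|[]] //.
rewrite /hit_event /= le_min; apply/andP; split.
  apply/hitT_le_hitT => j hxj; exists i; split => //.
  by rewrite leqNgt; apply/negP => hji; apply: (hj j hji).
by apply/hitT_le_fin; exists i; split => //; rewrite -truncn_ge_nat.
Qed.

Lemma hit_event_inf x z :
  hit_event (R := R) X x z +oo%E =
  \bigcap_N [set w | first_hit x z true (mkseq (fun i => X i w) N.+1)].
Proof.
apply/seteqP; split => w /=.
  rewrite /hit_event /= le_min leey andbT => /hitT_le_hitT hzx N _.
  apply/first_hitP.
  case: (hitT_cases z w) => [[i0 [h0 hmin _]]|[hn _]].
    case: (leqP i0 N) => hiN.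
      left; exists i0; split => // j hj hxj; case: (hzx j hxj) => i1 [hi1 hz1].
      by have := hmin _ hz1; lia.
    right; split => // i hi; split => [hzi|hxi]; first by have := hmin _ hzi; lia.
    by case: (hzx i hxi) => i1 [hi1 hz1]; have := hmin _ hz1; lia.
  right; split => // i hi; split => [hzi|hxi]; first by case: (hn i).
  by case: (hzx i hxi) => i1 [hi1 hz1]; case: (hn i1).
move=> h; rewrite /hit_event /= le_min leey andbT.
apply/hitT_le_hitT => j hxj.
have /first_hitP [[i [hi hzi _]]|[_ hn]] := h j I; first by exists i.
by case: (hn j (leqnn j)).
Qed.

End HittingTimes.

Section StepWeights.
Variables (R : realType) (om : int -> nat -> R).

Definition step_weight (c : nat) (l b : int) : R :=
  if b == l + 1 then om l c else if b == l - 1 then 1 - om l c else 0.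

Lemma walk_prob_rcons past a rest b :
  walk_prob om past a (rcons rest b) =
  walk_prob om past a rest *
  step_weight (count_mem (last a rest) past + count_mem (last a rest) (belast a rest))%N
    (last a rest) b.
Proof.
elim: rest past a => [|r0 rest IH] past a /=; first by rewrite mulr1 mul1r addn0.
by rewrite IH mulrA; congr (_ * step_weight _ _ _); rewrite /=; lia.
Qed.

Definition env_after (p : seq int) : int -> nat -> R :=
  fun u i => om u (i + count_mem u p)%N.

Lemma env_after_nil : env_after [::] = om.
Proof. by apply/funext => u; apply/funext => i; rewrite /env_after /= addn0. Qed.

Lemma env_after_cons a0 r :
  env_after (a0 :: r) = consume (env_after (belast a0 r)) (last a0 r).
Proof.
apply/funext => u; apply/funext => i.
rewrite /env_after /consume lastI -cats1 count_cat /= addn0 -addnA.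
by congr (om u (_ + _)%N); rewrite addnC eq_sym.
Qed.

End StepWeights.

Lemma setI_decided (T : Type) (C E : set T) (b : bool) : (forall w, C w -> (E w <-> b)) ->
  C `&` E = if b then C else set0.
Proof.
move=> h; apply/seteqP; split => w; first by move=> [hc /(h w hc) ->].
by case: b h => h //= hc; split => //; apply/(h w hc).
Qed.

Section ProbabilitySpace.
Variables (R : realType) (d : measure_display) (T : measurableType d).
Variable P : probability T R.

Lemma measure_setI_conull (C C' E : set T) : measurable C -> measurable C' ->
  measurable E -> C' `<=` C -> P C' = P C -> P (C `&` E) = P (C' `&` E).
Proof.
move=> mC mC' mE sC hP.
have Cfin : (P C < +oo)%E by rewrite (le_lt_trans (probability_le1 P mC)) // ltry.
have null : P (C `\` C') = 0%E.
  transitivity (P C - P C')%E; first by rewrite (measureD mC mC' Cfin) setIidr.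
  by rewrite hP subee // ge0_fin_numE.
have -> : C' `&` E = (C `&` E) `&` C'.
  by apply/seteqP; split => w /=; [move=> [h1 h2]; split => //; split => //; apply: sC | case=> [[]]].
rewrite (measureDI P (measurableI _ _ mC mE) mC') [X in (X + _)%E](_ : _ = 0%E) ?add0e //.
apply/eqP; rewrite eq_le measure_ge0 andbT -null.
by apply: le_measure; rewrite ?inE; [apply: measurableD; [apply: measurableI|]|
  apply: measurableD | move=> w [[]]].
Qed.

End ProbabilitySpace.

Section Law.
Variables (R : realType) (d : measure_display) (T : measurableType d).
Variables (P : probability T R) (om : int -> nat -> R) (y : int) (X : nat -> T -> int).
Hypothesis law : cookie_walk_law P om y X.

Definition cylinder (s : seq int) :=
  [set w | forall i, (i < size s)%N -> X i w = nth 0 s i].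

Lemma measurable_prefix n (f : nat -> int) :
  measurable [set w | forall i, (i < n)%N -> X i w = f i].
Proof.
elim: n => [|n IH].
  by rewrite (_ : [set w | _] = setT) //; apply/seteqP; split => // w _ i.
rewrite (_ : [set w | _] = [set w | forall i, (i < n)%N -> X i w = f i] `&`
  [set w | X n w = f n]); first by apply: measurableI => //; exact: law.1.
apply/seteqP; split => w /=; first by move=> h; split => [i hi|]; apply: h; lia.
by move=> [h1 h2] i; rewrite ltnS leq_eqVlt => /orP [/eqP ->|hi] //; apply: h1.
Qed.

Lemma cylinder_prob s : P (cylinder s) = (cyl_prob om y s)%:E.
Proof. exact: law.2. Qed.

Lemma cylinder_measurable s : measurable (cylinder s).
Proof. exact: measurable_prefix. Qed.

Lemma measurable_X_eqE k (e : \bar int) : measurable [set w | (X k w)%:E == e].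
Proof.
case: e => [e0| |].
- rewrite (_ : [set w | _] = [set w | X k w = e0]); first exact: law.1.
  by apply/seteqP; split => w /=; [move/eqP => [] | move=> ->].
- by rewrite (_ : [set w | _] = set0) //; apply/seteqP; split => w.
- by rewrite (_ : [set w | _] = set0) //; apply/seteqP; split => w.
Qed.

Lemma measurable_if (b1 b2 b3 : T -> bool) : measurable [set w | b1 w] ->
  measurable [set w | b2 w] -> measurable [set w | b3 w] ->
  measurable [set w | if b1 w then true else if b2 w then false else b3 w].
Proof.
move=> h1 h2 h3.
rewrite (_ : [set w | _] = [set w | b1 w] `|`
  ((~` [set w | b1 w]) `&` (~` [set w | b2 w]) `&` [set w | b3 w])).
  by apply: measurableU => //; apply: measurableI => //; apply: measurableI;
    exact: measurableC.
apply/seteqP; split => w /=.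
  by case: (b1 w) => /=; [left | case: (b2 w) => //= h; right].
case: (b1 w) => //=; case=> // [[[]]] // h.
by case: (b2 w) h => //= h _ ->.
Qed.

Lemma first_hit_window_step x z b k n w :
  first_hit x z b (mkseq (fun i => X (k + i)%N w) n.+2) =
  (if (X k w)%:E == z then true else if (X k w)%:E == x then false
   else first_hit x z b (mkseq (fun i => X (k.+1 + i)%N w) n.+1)).
Proof.
rewrite mkseq_cons (eq_mkseq _ (g := fun i => X (k.+1 + i)%N w)) /= ?addn0 // => i.
by rewrite addSnnS.
Qed.

Lemma first_hit_event_measurable x z b n k : measurable (first_hit_event X x z b k n).
Proof.
elim: n k => [|n IH] k.
  rewrite /first_hit_event /= addn0.
  apply: measurable_if; try exact: measurable_X_eqE.
  by case: b; [rewrite (_ : [set _ | _] = setT) //; apply/seteqP; split |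
    rewrite (_ : [set _ | _] = set0) //; apply/seteqP; split].
rewrite (_ : first_hit_event X _ _ _ _ _ = [set w | if (X k w)%:E == z then true
  else if (X k w)%:E == x then false
  else first_hit x z b (mkseq (fun i => X (k.+1 + i)%N w) n.+1)]).
  by apply: measurable_if; [exact: measurable_X_eqE | exact: measurable_X_eqE | exact: IH].
by apply/seteqP; split => w /= h;
  [rewrite -first_hit_window_step | rewrite -first_hit_window_step in h].
Qed.

Lemma cylinder_rcons a0 r b :
  cylinder (a0 :: rcons r b) = cylinder (a0 :: r) `&` [set w | X (size r).+1 w = b].
Proof.
apply/seteqP; split => w /=.
- move=> h; split.
  + move=> i hi; have hi' : (i < size (a0 :: rcons r b))%N.
      by rewrite /= size_rcons; move: hi => /=; lia.
    by rewrite (h i hi') -rcons_cons nth_rcons hi.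
  + have hi' : ((size r).+1 < size (a0 :: rcons r b))%N by rewrite /= size_rcons.
    by rewrite (h _ hi') -rcons_cons nth_rcons /= ltnn eqxx.
- move=> [h1 h2] i; rewrite -rcons_cons nth_rcons size_rcons => hi.
  case: ltnP => hi'; first exact: h1.
  by rewrite (_ : i = (size r).+1) /= ?eqxx //; move: hi hi' => /=; lia.
Qed.

Lemma cylinder_last a0 r w : cylinder (a0 :: r) w -> X (size r) w = last a0 r.
Proof.
by move=> h; rewrite (h (size r)) //; have := nth_last 0 (a0 :: r); rewrite /= => ->.
Qed.

Lemma cyl_prob_rcons a0 r b : cyl_prob om y (a0 :: rcons r b) =
  cyl_prob om y (a0 :: r) *
  step_weight om (count_mem (last a0 r) (belast a0 r)) (last a0 r) b.
Proof. by rewrite /cyl_prob walk_prob_rcons /= add0n mulrA. Qed.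

Lemma cylinder_split a0 r E : measurable E ->
  let l := last a0 r in
  P (cylinder (a0 :: r) `&` E) =
  (P (cylinder (a0 :: rcons r (l + 1)%R) `&` E) +
   P (cylinder (a0 :: rcons r (l - 1)%R) `&` E))%E.
Proof.
move=> mE l.
set C1 := cylinder (a0 :: rcons r (l + 1)); set C2 := cylinder (a0 :: rcons r (l - 1)).
have mC1 : measurable C1 := cylinder_measurable _.
have mC2 : measurable C2 := cylinder_measurable _.
have dis : C1 `&` C2 = set0.
  apply/seteqP; split => // w; rewrite /C1 /C2 !cylinder_rcons => [[[_ h1] [_ h2]]].
  by move: h1 h2 => /= -> h; exfalso; lia.
have sub : C1 `|` C2 `<=` cylinder (a0 :: r).
  by move=> w; rewrite /C1 /C2 !cylinder_rcons => [[[]|[]]].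
have hU : P (C1 `|` C2) = P (cylinder (a0 :: r)).
  transitivity (P C1 + P C2)%E; first exact: measureU.
  rewrite !cylinder_prob !cyl_prob_rcons -EFinD /step_weight eqxx.
  by rewrite (_ : (l - 1 == l + 1) = false) ?eqxx; [congr EFin; ring | apply/eqP; lia].
rewrite (measure_setI_conull (cylinder_measurable _) _ mE sub hU); last exact: measurableU.
rewrite setIUl measureU //; try exact: measurableI.
by rewrite setIACA dis set0I.
Qed.

Lemma cylinder_first_hit_prob x z (b : bool) n r a0 :
  P (cylinder (a0 :: r) `&` first_hit_event X x z b (size r) n) =
  (cyl_prob om y (a0 :: r) *
   hit_prob x z b%:R (env_after om (belast a0 r)) (last a0 r) n)%:E.
Proof.
elim: n r a0 => [|n IH] r a0; set l := last a0 r.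
  rewrite (@setI_decided _ _ _
    (if l%:E == z then true else if l%:E == x then false else b)); last first.
    by move=> w hc; rewrite /first_hit_event /= addn0 (cylinder_last hc).
  have hC := cylinder_prob (a0 :: r); rewrite /=.
  case: (l%:E == z) => /=; first by rewrite hC mulr1.
  case: (l%:E == x) => /=; first by rewrite measure0 mulr0.
  by case: b => /=; [rewrite hC mulr1 | rewrite measure0 mulr0].
have hstep w : cylinder (a0 :: r) w -> (first_hit_event X x z b (size r) n.+1 w <->
   is_true (if l%:E == z then true else if l%:E == x then false
    else first_hit x z b (mkseq (fun i => X ((size r).+1 + i)%N w) n.+1))).
  by move=> hc; rewrite /l -(cylinder_last hc) -first_hit_window_step.
have [hz|hz] := eqVneq (l%:E) z.
  rewrite (@setI_decided _ _ _ true) => [|w /hstep]; last by rewrite hz eqxx.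
  by rewrite cylinder_prob hit_prob_target // mulr1.
have [hx|hx] := eqVneq (l%:E) x.
  rewrite (@setI_decided _ _ _ false) => [|w /hstep]; last by rewrite (negbTE hz) hx eqxx.
  by rewrite measure0 hit_prob_barrier // mulr0.
rewrite (_ : _ `&` _ = cylinder (a0 :: r) `&` first_hit_event X x z b (size r).+1 n);
  last first.
  apply/seteqP; split => w [hc he]; split => //.
    by move: ((hstep w hc).1 he); rewrite (negbTE hz) (negbTE hx).
  by apply/(hstep w hc); rewrite (negbTE hz) (negbTE hx).
rewrite cylinder_split; last exact: first_hit_event_measurable.
have := IH (rcons r (l + 1)) a0; rewrite size_rcons => ->.
have := IH (rcons r (l - 1)) a0; rewrite size_rcons => ->.
rewrite !cyl_prob_rcons !belast_rcons !last_rcons -EFinD /= (negbTE hz) (negbTE hx).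
rewrite -env_after_cons /step_weight /env_after /= add0n eqxx.
rewrite (_ : (l - 1 == l + 1) = false) ?eqxx; last by apply/eqP; lia.
by congr EFin; ring.
Qed.

Lemma first_hit_event_prob x z (b : bool) N :
  P (first_hit_event X x z b 0 N) = (hit_prob x z b%:R om y N)%:E.
Proof.
have hy : P (cylinder [:: y]) = P setT.
  by rewrite probability_setT cylinder_prob /cyl_prob /= eqxx mulr1.
rewrite -[first_hit_event X _ _ _ _ _]setTI (measure_setI_conull measurableT
  (cylinder_measurable _) (first_hit_event_measurable _ _ _ _ _) _ hy) //.
by rewrite (cylinder_first_hit_prob x z b N [::] y) /= env_after_nil eqxx !mul1r.
Qed.

End Law.

Lemma measure_bigcap_le (R : realType) d1 d2 (T1 : measurableType d1)
    (T2 : measurableType d2) (P1 : probability T1 R) (P2 : probability T2 R)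
    (F1 : nat -> set T1) (F2 : nat -> set T2) :
  (forall N, measurable (F1 N)) -> (forall N, measurable (F2 N)) ->
  {homo F2 : n m / (n <= m)%N >-> (m <= n)%O} ->
  (forall N, P1 (F1 N) <= P2 (F2 N))%E ->
  (P1 (\bigcap_N F1 N) <= P2 (\bigcap_N F2 N))%E.
Proof.
move=> mF1 mF2 F2_anti le12.
have fin : (P2 (F2 0%N) < +oo)%E.
  by rewrite (le_lt_trans (probability_le1 P2 (mF2 0%N))) // ltry.
have cv := nonincreasing_cvg_mu fin mF2 (bigcapT_measurable mF2) F2_anti.
rewrite -(cvg_lim (@ereal_hausdorff R) cv).
apply: lime_ge; first by apply/cvg_ex; eexists; exact: cv.
apply: nearW => N; apply: le_trans (le12 N).
by apply: le_measure; rewrite ?inE //; [exact: bigcapT_measurable | move=> w; apply].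
Qed.

Lemma cookie_env_plus_01 (R : realType) (omega : int -> nat -> R) :
  cookie_env_plus omega -> env01 omega.
Proof.
move=> hom u i; have /andP[h1 ->] := hom u i; rewrite andbT.
by apply: le_trans h1; rewrite divr_ge0 // ler01.
Qed.

Theorem mainTheorem14 (R : realType) (omega : int -> nat -> R)
  (x z : \bar int) (y1 y2 : int) (t : \bar R)
  (d1 d2 : measure_display) (T1 : measurableType d1) (T2 : measurableType d2)
  (P1 : probability T1 R) (P2 : probability T2 R)
  (X1 : nat -> T1 -> int) (X2 : nat -> T2 -> int) :
  cookie_env_plus omega ->
  (x <= y1%:E)%E -> y1 <= y2 -> (y2%:E <= z)%E -> (0 <= t)%E ->
  cookie_walk_law P1 omega y1 X1 ->
  cookie_walk_law P2 omega y2 X2 ->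
  (P1 (hit_event X1 x z t) <= P2 (hit_event X2 x z t))%E.
Proof.
move=> hom hx h12 hz ht law1 law2.
have le_N b N : (P1 (first_hit_event X1 x z b 0 N) <= P2 (first_hit_event X2 x z b 0 N))%E.
  rewrite (first_hit_event_prob law1) (first_hit_event_prob law2) lee_fin.
  exact: hit_prob_mono (cookie_env_plus_01 hom) hx h12 hz.
case: t ht => [r| |] ht //.
  rewrite lee_fin in ht; rewrite !hit_event_fin //.
  exact: le_N.
rewrite !hit_event_inf.
apply: (measure_bigcap_le (F1 := first_hit_event X1 x z true 0)
  (F2 := first_hit_event X2 x z true 0)).
- by move=> N; apply: (first_hit_event_measurable law1).
- by move=> N; apply: (first_hit_event_measurable law2).
- exact: first_hit_event_antitone.
- by move=> N; apply: le_N.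
Qed.
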